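(* Let $S_X,S_Y$ be finite nonempty action sets, $\lambda\in[0,1)$, and let $\varphi(s_X,s_Y)=\phi_X(s_X)+\phi_Y(s_Y)$ be additive. Let $\tau_X^+,\tau_X^-\in\Delta(S_X)$ satisfy $$\min_{s_Y}\varphi(\tau_X^+,s_Y)\ge(1-\lambda)\max_{s_Y}\varphi(\tau_X^+,s_Y)+\lambda\max_{s_Y}\varphi(\tau_X^-,s_Y),$$ $$\max_{s_Y}\varphi(\tau_X^-,s_Y)\le\lambda\min_{s_Y}\varphi(\tau_X^+,s_Y)+(1-\lambda)\min_{s_Y}\varphi(\tau_X^-,s_Y).$$ Then for every $K\in\big[\phi_X(\tau_X^-)+\max_{s_Y}\phi_Y(s_Y),\ \phi_X(\tau_X^+)+\min_{s_Y}\phi_Y(s_Y)\big]$ there exist $p_0\in[0,1]$ and $p^*:S_Y\to[0,1]$ such that the two-point reactive strategy which plays $p_0\tau_X^++(1-p_0)\tau_X^-$ in round $0$ and $\sigma_X^*[s_Y]=p^*[s_Y]\tau_X^++(1-p^*[s_Y])\tau_X^-$ in round $t+1$ after $Y$ played $s_Y$ in round $t$ enforces $\varphi\equiv K$, i.e., is $(\varphi-K,\lambda)$-autocratic.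
   Context: Two players $X,Y$ play a repeated game with finite action sets $S_X,S_Y$; $\Delta(S)$ denotes the probability distributions on $S$. Additive means $\phi_X:S_X\to\mathbb{R}$, $\phi_Y:S_Y\to\mathbb{R}$ with $\varphi(s_X,s_Y)=\phi_X(s_X)+\phi_Y(s_Y)$; $\phi_X(\tau_X)=\mathbb{E}_{s_X\sim\tau_X}[\phi_X(s_X)]$ and $\varphi(\tau_X,s_Y)=\mathbb{E}_{s_X\sim\tau_X}[\varphi(s_X,s_Y)]$; maxima/minima over $s_Y$ are over $S_Y$. Histories: $\mathcal{H}=\bigcup_{T\ge0}(S_X\times S_Y)^T$; behavioral strategies are maps $\sigma:\mathcal{H}\to\Delta(S)$; players independently draw actions each round from their strategies evaluated at the history of realized action pairs, with $\mathbb{E}_{\sigma_X,\sigma_Y}$ the expectation over the resulting play. For $f:S_X\times S_Y\to\mathbb{R}$, $\sigma_X$ is $(f,\lambda)$-autocratic if for every behavioral strategy $\sigma_Y$ of $Y$, $\mathbb{E}_{\sigma_X,\sigma_Y}[(1-\lambda)\sum_{t\ge0}\lambda^tf(s_X^t,s_Y^t)]=0$. *)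

From HB Require Import structures.
From mathcomp Require Import all_boot all_order all_algebra.
From mathcomp Require Import classical_sets boolp reals topology normedtype sequences.
Import numFieldNormedType.Exports.
Local Open Scope classical_set_scope.
Set Implicit Arguments. Unset Strict Implicit. Unset Printing Implicit Defensive.
Import Order.TTheory GRing.Theory Num.Theory.
Local Open Scope ring_scope.

Section Game.
Variables (R : realType) (SX SY : finType).

Definition is_dist (T : finType) (p : T -> R) : Prop :=
  (forall x, 0 <= p x) /\ \sum_(x : T) p x = 1.

Definition history := seq (SX * SY).
Definition stratX := history -> SX -> R.
Definition stratY := history -> SY -> R.

Fixpoint hprob_from (sX : stratX) (sY : stratY) (prefix rest : history) : R :=
  match rest with
  | [::] => 1
  | e :: r => sX prefix e.1 * sY prefix e.2 * hprob_from sX sY (rcons prefix e) r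
  end.

Definition hprob (sX : stratX) (sY : stratY) (h : history) : R :=
  hprob_from sX sY [::] h.

(* E[f(s_X^t, s_Y^t)] : sum over all histories of length t+1 *)
Definition stage_exp (sX : stratX) (sY : stratY) (f : SX -> SY -> R) (t : nat) : R :=
  \sum_(h : (t.+1).-tuple (SX * SY))
     hprob sX sY h * f (tnth h ord_max).1 (tnth h ord_max).2.

Definition disc_partial (sX : stratX) (sY : stratY) (f : SX -> SY -> R) (lam : R)
  (n : nat) : R :=
  \sum_(t < n) (1 - lam) * lam ^+ t * stage_exp sX sY f t.

Definition autocratic (f : SX -> SY -> R) (lam : R) (sX : stratX) : Prop :=
  forall sY : stratY, (forall h, is_dist (sY h)) ->
    disc_partial sX sY f lam @ \oo --> (0 : R).

Definition expX (phiX : SX -> R) (tau : SX -> R) : R := \sum_(x : SX) tau x * phiX x.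
Definition phi_mix (phiX : SX -> R) (phiY : SY -> R) (tau : SX -> R) (y : SY) : R :=
  \sum_(x : SX) tau x * (phiX x + phiY y).

(* max / min over S_Y (0 if S_Y were empty; S_Y is assumed nonempty) *)
Definition maxY (g : SY -> R) : R :=
  if [pick y : SY] is Some y0 then \big[Num.max/g y0]_(y : SY) g y else 0.
Definition minY (g : SY -> R) : R :=
  if [pick y : SY] is Some y0 then \big[Num.min/g y0]_(y : SY) g y else 0.

Definition mixX (p : R) (tp tm : SX -> R) : SX -> R := fun x => p * tp x + (1 - p) * tm x.

Definition reactive (p0 : R) (pstar : SY -> R) (tp tm : SX -> R) : stratX :=
  fun h => match rev h with
           | [::] => mixX p0 tp tm
           | e :: _ => mixX (pstar e.2) tp tm
           end.

End Game.

From HB Require Import structures.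
From mathcomp Require Import all_boot all_order all_algebra.
From mathcomp Require Import classical_sets boolp reals topology normedtype sequences.
From mathcomp Require Import ring lra.
Import numFieldNormedType.Exports.
Local Open Scope classical_set_scope.
Import Order.TTheory GRing.Theory Num.Theory.
Local Open Scope ring_scope.
Set Implicit Arguments. Unset Strict Implicit. Unset Printing Implicit Defensive.

(* Fix a strategy of Y and write q_t for the expected weight the reactive strategy puts on tau+
   in round t, e_t for the expected value of phi_Y in round t, D = phi_X(tau+) - phi_X(tau-) and
   c = K - phi_X(tau-). The expected stage value of phi - K is D q_t + e_t - c, and choosing
   lam D p*[s_Y] = b - phi_Y(s_Y) ties consecutive rounds together: lam D q_(t+1) = b - e_t.
   With (1 - lam) D p_0 = c - b the discounted partial sums then telescope to
   lam^n (c - b - (1 - lam) D q_n), which tends to 0 geometrically. The bounds on K and the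
   second hypothesis leave room for a threshold b making p_0 and all p*[s_Y] probabilities. *)

Section Expectation.
Variables (R : realType) (T : finType).
Implicit Types (c p : R) (g tau : T -> R).

Lemma expXZ c g tau : expX (fun x => c * g x) tau = c * expX g tau.
Proof. by rewrite /expX mulr_sumr; apply: eq_bigr => x _; rewrite mulrCA. Qed.

Lemma expX_addr c g tau : is_dist tau -> expX (fun x => g x + c) tau = expX g tau + c.
Proof.
move=> [_ tau1]; rewrite /expX; under eq_bigr do rewrite mulrDr.
by rewrite big_split /= -mulr_suml tau1 mul1r.
Qed.

Lemma expXBl c g tau : is_dist tau -> expX (fun x => c - g x) tau = c - expX g tau.
Proof.
move=> [_ tau1]; rewrite /expX; under eq_bigr do rewrite mulrBr.
by rewrite sumrB -mulr_suml tau1 mul1r.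
Qed.

Lemma expX_mixX p g (tp tm : T -> R) :
  expX g (mixX p tp tm) = p * expX g tp + (1 - p) * expX g tm.
Proof.
by rewrite /expX /mixX !mulr_sumr -big_split; apply: eq_bigr => x _ /=; ring.
Qed.

Lemma mixX_dist p (tp tm : T -> R) :
  is_dist tp -> is_dist tm -> 0 <= p <= 1 -> is_dist (mixX p tp tm).
Proof.
move=> [tp0 tp1] [tm0 tm1] /andP[p0 p1]; split=> [x|].
  by rewrite /mixX addr_ge0 ?mulr_ge0 ?subr_ge0.
by rewrite /mixX big_split /= -!mulr_sumr tp1 tm1; ring.
Qed.

End Expectation.

Lemma phi_mixE (R : realType) (SX SY : finType) (phiX : SX -> R) (phiY : SY -> R) tau y :
  is_dist tau -> phi_mix phiX phiY tau y = expX phiX tau + phiY y.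
Proof. exact: expX_addr. Qed.

Section ProductExpectation.
Variables (R : realType) (T1 T2 : finType) (a : T1 -> R) (b : T2 -> R).

Lemma expX_pairl (u : T1 -> R) : is_dist b ->
  \sum_x \sum_y a x * b y * u x = expX u a.
Proof.
move=> [_ b1]; apply: eq_bigr => x _.
by rewrite -mulr_suml -mulr_sumr b1 mulr1 mulrC.
Qed.

Lemma expX_pairr (v : T2 -> R) : is_dist a ->
  \sum_x \sum_y a x * b y * v y = expX v b.
Proof.
move=> [_ a1]; rewrite exchange_big; apply: eq_bigr => y _.
by under eq_bigr do rewrite -mulrA; rewrite -mulr_suml a1 mul1r.
Qed.

Lemma expX_pairD (u : T1 -> R) (v : T2 -> R) : is_dist a -> is_dist b ->
  \sum_x \sum_y a x * b y * (u x + v y) = expX u a + expX v b.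
Proof.
move=> da db; rewrite -expX_pairl // -expX_pairr // -big_split.
by apply: eq_bigr => x _; rewrite -big_split; apply: eq_bigr => y _; rewrite mulrDr.
Qed.

End ProductExpectation.

Lemma big_tuple0 (V : nmodType) (T : finType) (G : 0.-tuple T -> V) :
  \sum_(h : 0.-tuple T) G h = G [tuple].
Proof. by rewrite (big_pred1 [tuple]) // => h; rewrite /= (tuple0 h); apply/esym/eqP. Qed.

Lemma big_tuple_rcons (V : nmodType) (T : finType) n (G : n.+1.-tuple T -> V) :
  \sum_(h : n.+1.-tuple T) G h = \sum_(h : n.-tuple T) \sum_(e : T) G [tuple of rcons h e].
Proof.
rewrite pair_big /=.
pose split_last (h : n.+1.-tuple T) :=
  ([tuple of belast (thead h) (behead h)], last (thead h) (behead h)).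
have rcons_split (h : n.+1.-tuple T) :
    rcons (split_last h).1 (split_last h).2 = h.
  by rewrite /= -lastI; case: h => [[|x s] sz].
rewrite (reindex (fun p : n.-tuple T * T => [tuple of rcons p.1 p.2])) //.
exists split_last => [[h e] _ | h _]; last exact/val_inj/rcons_split.
have /rcons_inj [h_eq e_eq] := rcons_split [tuple of rcons h e].
by congr pair; first apply: val_inj.
Qed.

Section Extrema.
Variables (R : realType) (T : finType) (g : T -> R).

Lemma le_maxY y : g y <= maxY g.
Proof. by rewrite /maxY; case: pickP => [y0 _|/(_ y)//]; apply: le_bigmax. Qed.

Lemma minY_le y : minY g <= g y.
Proof. by rewrite /minY; case: pickP => [y0 _|/(_ y)//]; apply: bigmin_le. Qed.

Lemma maxY_le c : (0 < #|T|)%N -> (forall y, g y <= c) -> maxY g <= c.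
Proof.
move=> /card_gt0P[y _] le_gc; rewrite /maxY; case: pickP => [y0 _|/(_ y)//].
exact: bigmax_le.
Qed.

End Extrema.

Lemma ratio_unit_interval (R : realFieldType) (u v : R) :
  0 <= u <= v -> 0 <= u / v <= 1 /\ v * (u / v) = u.
Proof.
case/andP=> u0 uv; have [v0|v_neq0] := eqVneq v 0.
  have -> : u = 0 by apply/eqP; rewrite eq_le u0 -v0 uv.
  by rewrite v0 !mul0r lexx ler01.
have v_gt0 : 0 < v by rewrite lt_def v_neq0 (le_trans u0 uv).
split; last by rewrite mulrC divfK.
by rewrite divr_ge0 ?ler_pdivrMr ?mul1r // ltW.
Qed.

Lemma cvg0_geometric_le (R : realType) (u : R ^nat) (C lam : R) :
  0 <= lam < 1 -> (forall n, `|u n| <= C * lam ^+ n) -> u @ \oo --> 0.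
Proof.
move=> /andP[lam0 lam1] le_u.
have geo : (fun n => C * lam ^+ n) @ \oo --> 0.
  by rewrite -(mulr0 C); apply: cvgMl_tmp; apply: cvg_expr; rewrite ger0_norm.
apply: (squeeze_cvgr (f := fun n => - (C * lam ^+ n)) _ _ geo).
  by apply: nearW => n; rewrite -ler_norml.
by rewrite -oppr0; apply: cvgN.
Qed.

Section Histories.
Variables (R : realType) (SX SY : finType) (sX : stratX R SX SY) (sY : stratY R SX SY).

Lemma hprob_from_rcons pre r e : hprob_from sX sY pre (rcons r e) =
  hprob_from sX sY pre r * (sX (pre ++ r) e.1 * sY (pre ++ r) e.2).
Proof.
elim: r pre => [|a r IH] pre /=; first by rewrite cats0 mulr1 mul1r.
by rewrite IH cat_rcons !mulrA.
Qed.

Definition hexp t (k : history SX SY -> R) : R :=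
  \sum_(h : t.-tuple (SX * SY)) hprob sX sY h * k h.

Lemma sum_hprob_rcons t (G : t.+1.-tuple (SX * SY) -> R) :
  \sum_(h : t.+1.-tuple (SX * SY)) hprob sX sY h * G h =
  \sum_(h : t.-tuple (SX * SY)) hprob sX sY h *
    \sum_x \sum_y sX h x * sY h y * G [tuple of rcons h (x, y)].
Proof.
rewrite big_tuple_rcons; apply: eq_bigr => h _.
rewrite pair_big /= mulr_sumr; apply: eq_bigr => -[x y] _.
by rewrite /hprob hprob_from_rcons !mulrA.
Qed.

Lemma hexp0 k : hexp 0 k = k [::].
Proof. by rewrite /hexp big_tuple0 /hprob mul1r. Qed.

Lemma hexpS t k : hexp t.+1 k =
  hexp t (fun h => \sum_x \sum_y sX h x * sY h y * k (rcons h (x, y))).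
Proof. exact: sum_hprob_rcons. Qed.

Lemma stage_expE f t : stage_exp sX sY f t =
  hexp t (fun h => \sum_x \sum_y sX h x * sY h y * f x y).
Proof.
rewrite /stage_exp sum_hprob_rcons; apply: eq_bigr => h _; congr (_ * _).
apply: eq_bigr => x _; apply: eq_bigr => y _.
by rewrite (tnth_nth (x, y)) /= nth_rcons size_tuple ltnn eqxx.
Qed.

Lemma hexpD t k1 k2 : hexp t (fun h => k1 h + k2 h) = hexp t k1 + hexp t k2.
Proof. by rewrite /hexp -big_split; apply: eq_bigr => h _; rewrite mulrDr. Qed.

Lemma hexpB t k1 k2 : hexp t (fun h => k1 h - k2 h) = hexp t k1 - hexp t k2.
Proof. by rewrite /hexp -sumrB; apply: eq_bigr => h _; rewrite mulrBr. Qed.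

Lemma hexpZ t c k : hexp t (fun h => c * k h) = c * hexp t k.
Proof. by rewrite /hexp mulr_sumr; apply: eq_bigr => h _; rewrite mulrCA. Qed.

Hypotheses (dX : forall h, is_dist (sX h)) (dY : forall h, is_dist (sY h)).

Lemma hprob_from_ge0 pre r : 0 <= hprob_from sX sY pre r.
Proof.
elim: r pre => [|e r IH] pre //=.
by rewrite !mulr_ge0 // ?(dX _).1 ?(dY _).1.
Qed.

Lemma hexp_cst t c : hexp t (fun=> c) = c.
Proof.
rewrite -[c]mulr1 hexpZ; congr (c * _).
elim: t => [|t IH]; first by rewrite hexp0.
rewrite hexpS -[RHS]IH; congr hexp; apply/funext => h.
by rewrite expX_pairr // /expX; under eq_bigr do rewrite mulr1; apply: (dY h).2.
Qed.

Lemma ler_hexp t k1 k2 : (forall h, k1 h <= k2 h) -> hexp t k1 <= hexp t k2.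
Proof.
by move=> le_k; apply: ler_sum => h _; rewrite ler_wpM2l ?hprob_from_ge0.
Qed.

End Histories.

Section ReactiveStrategy.
Variables (R : realType) (SX SY : finType) (tp tm : SX -> R) (p0 : R) (pstar : SY -> R).
Hypotheses (dtp : is_dist tp) (dtm : is_dist tm).
Hypotheses (p0_01 : 0 <= p0 <= 1) (pstar_01 : forall y, 0 <= pstar y <= 1).

Definition reactive_weight (h : history SX SY) : R :=
  match rev h with [::] => p0 | e :: _ => pstar e.2 end.

Local Notation sX := (reactive p0 pstar tp tm).

Lemma reactiveE h : sX h = mixX (reactive_weight h) tp tm.
Proof. by rewrite /reactive /reactive_weight; case: (rev h). Qed.

Lemma reactive_weight_rcons h e : reactive_weight (rcons h e) = pstar e.2.
Proof. by rewrite /reactive_weight rev_rcons. Qed.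

Lemma reactive_weight_01 h : 0 <= reactive_weight h <= 1.
Proof. by rewrite /reactive_weight; case: (rev h). Qed.

Lemma reactive_dist h : is_dist (sX h).
Proof. by rewrite reactiveE; apply: mixX_dist => //; apply: reactive_weight_01. Qed.

Variables (phiX : SX -> R) (phiY : SY -> R) (lam K b : R).
Local Notation D := (expX phiX tp - expX phiX tm).
Hypothesis pstar_eq : forall y, lam * D * pstar y = b - phiY y.
Hypothesis p0_eq : (1 - lam) * D * p0 = K - expX phiX tm - b.

Section Play.
Variables (sY : stratY R SX SY) (dY : forall h, is_dist (sY h)).
Local Notation q t := (hexp sX sY t reactive_weight).
Local Notation e t := (hexp sX sY t (fun h => expX phiY (sY h))).

Lemma stage_exp_reactive t :
  stage_exp sX sY (fun x y => phiX x + phiY y - K) t = D * q t + e t + (expX phiX tm - K).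
Proof.
rewrite stage_expE.
transitivity (hexp sX sY t (fun h =>
    D * reactive_weight h + expX phiY (sY h) + (expX phiX tm - K))).
  congr hexp; apply/funext => h.
  under eq_bigr do under eq_bigr do rewrite addrAC.
  rewrite (expX_pairD _ _ (reactive_dist h) (dY h)) (expX_addr (- K) phiX (reactive_dist h)).
  by rewrite reactiveE expX_mixX; ring.
by rewrite hexpD (hexp_cst reactive_dist dY) hexpD hexpZ.
Qed.

Lemma hexp_reactive_weightS t : lam * D * q t.+1 = b - e t.
Proof.
rewrite hexpS -hexpZ -[b](hexp_cst reactive_dist dY t) -hexpB.
congr hexp; apply/funext => h.
under eq_bigr do under eq_bigr do rewrite reactive_weight_rcons /=.
rewrite expX_pairr; last exact: reactive_dist.
rewrite -(expXBl b phiY (dY h)) -expXZ.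
by congr expX; apply/funext => y.
Qed.

Lemma disc_partial_reactive n :
  disc_partial sX sY (fun x y => phiX x + phiY y - K) lam n =
  lam ^+ n * (K - expX phiX tm - b - (1 - lam) * D * q n).
Proof.
elim: n => [|n IH].
  by rewrite /disc_partial big_ord0 expr0 mul1r hexp0 /reactive_weight /= p0_eq; ring.
rewrite /disc_partial big_ord_recr /= -/(disc_partial _ _ _ _ n) IH stage_exp_reactive.
have -> : e n = b - lam * D * q n.+1 by rewrite hexp_reactive_weightS; ring.
by rewrite exprS; ring.
Qed.

Lemma reactive_weight_mean_01 t : 0 <= q t <= 1.
Proof.
rewrite -[0](hexp_cst reactive_dist dY t) -[1](hexp_cst reactive_dist dY t).
by apply/andP; split; apply: (ler_hexp reactive_dist dY) => h;
  case/andP: (reactive_weight_01 h).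
Qed.

End Play.

Lemma reactive_autocratic :
  0 <= lam < 1 -> autocratic (fun x y => phiX x + phiY y - K) lam sX.
Proof.
move=> lam01 sY dY; have /andP[lam0 /ltW lam1] := lam01.
have lam1' : 0 <= 1 - lam by rewrite subr_ge0.
apply: (cvg0_geometric_le (C := `|K - expX phiX tm - b| + (1 - lam) * `|D|) lam01) => n.
rewrite disc_partial_reactive // normrM ger0_norm ?exprn_ge0 // mulrC.
rewrite ler_wpM2r ?exprn_ge0 //; apply: le_trans (ler_normB _ _) _; rewrite lerD2l.
have /andP[q0 q1] := reactive_weight_mean_01 dY n.
by rewrite !normrM (ger0_norm q0) (ger0_norm lam1') ler_piMr // mulr_ge0.
Qed.

End ReactiveStrategy.

Lemma maxY_le_add_gap (R : realType) (SX SY : finType) (neY : (0 < #|SY|)%N)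
    (lam : R) (phiX : SX -> R) (phiY : SY -> R) (tp tm : SX -> R) :
  0 <= lam <= 1 -> is_dist tp -> is_dist tm ->
  maxY (phi_mix phiX phiY tm) <=
    lam * minY (phi_mix phiX phiY tp) + (1 - lam) * minY (phi_mix phiX phiY tm) ->
  forall y, maxY phiY <= phiY y + lam * (expX phiX tp - expX phiX tm).
Proof.
move=> /andP[lam0 lam1] dtp dtm h2 y; apply: maxY_le => // y'.
have lam1' : 0 <= 1 - lam by rewrite subr_ge0.
have := le_maxY (phi_mix phiX phiY tm) y'.
have := ler_wpM2l lam0 (minY_le (phi_mix phiX phiY tp) y).
have := ler_wpM2l lam1' (minY_le (phi_mix phiX phiY tm) y).
rewrite !phi_mixE //; lra.
Qed.

Lemma reactive_threshold (R : realType) (SX SY : finType) (neY : (0 < #|SY|)%N)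
    (lam : R) (phiX : SX -> R) (phiY : SY -> R) (tp tm : SX -> R) (K : R) :
  0 <= lam < 1 -> is_dist tp -> is_dist tm ->
  maxY (phi_mix phiX phiY tm) <=
    lam * minY (phi_mix phiX phiY tp) + (1 - lam) * minY (phi_mix phiX phiY tm) ->
  expX phiX tm + maxY phiY <= K -> K <= expX phiX tp + minY phiY ->
  exists b, (forall y, 0 <= b - phiY y <= lam * (expX phiX tp - expX phiX tm)) /\
    0 <= K - expX phiX tm - b <= (1 - lam) * (expX phiX tp - expX phiX tm).
Proof.
move=> /andP[lam0 lam1] dtp dtm h2 hK1 hK2.
have lam01 : 0 <= lam <= 1 by rewrite lam0 ltW.
have gap := maxY_le_add_gap neY lam01 dtp dtm h2.
have lam1' : 0 <= 1 - lam by rewrite subr_ge0 ltW.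
have [y0 _] := card_gt0P neY.
set D := expX phiX tp - expX phiX tm.
have D_ge0 : 0 <= D by have := le_maxY phiY y0; have := minY_le phiY y0; rewrite /D; lra.
exists (Num.max (maxY phiY) (K - expX phiX tm - (1 - lam) * D)).
set b := Num.max _ _.
have b_ge1 : maxY phiY <= b by rewrite le_max lexx.
have b_ge2 : K - expX phiX tm - (1 - lam) * D <= b by rewrite le_max lexx orbT.
have b_le c : maxY phiY <= c -> K - expX phiX tm - (1 - lam) * D <= c -> b <= c.
  by move=> le1 le2; rewrite ge_max le1.
split=> [y|]; apply/andP; split.
- by have := le_maxY phiY y; lra.
- rewrite lerBlDl; apply: b_le; first exact: gap.
  by have := minY_le phiY y; rewrite /D; lra.
- rewrite subr_ge0; apply: b_le; first lra.
  by rewrite lerBlDr lerDl mulr_ge0.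
- by lra.
Qed.

Theorem lemma3 (R : realType) (SX SY : finType)
  (neX : (0 < #|SX|)%N) (neY : (0 < #|SY|)%N)
  (lam : R) (hlam0 : 0 <= lam) (hlam1 : lam < 1)
  (phiX : SX -> R) (phiY : SY -> R)
  (tp tm : SX -> R) (htp : is_dist tp) (htm : is_dist tm)
  (h1 : minY (phi_mix phiX phiY tp) >=
        (1 - lam) * maxY (phi_mix phiX phiY tp) + lam * maxY (phi_mix phiX phiY tm))
  (h2 : maxY (phi_mix phiX phiY tm) <=
        lam * minY (phi_mix phiX phiY tp) + (1 - lam) * minY (phi_mix phiX phiY tm))
  (K : R)
  (hK1 : expX phiX tm + maxY phiY <= K)
  (hK2 : K <= expX phiX tp + minY phiY) :
  exists (p0 : R) (pstar : SY -> R),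
    0 <= p0 <= 1 /\ (forall y, 0 <= pstar y <= 1) /\
    autocratic (fun x y => phiX x + phiY y - K) lam (reactive p0 pstar tp tm).
Proof.
have lam01 : 0 <= lam < 1 by rewrite hlam0.
have [b [pstar_ok p0_ok]] := reactive_threshold neY lam01 htp htm h2 hK1 hK2.
have [p0_01 p0_eq] := ratio_unit_interval p0_ok.
have pstar_ratio y := ratio_unit_interval (pstar_ok y).
exists ((K - expX phiX tm - b) / ((1 - lam) * (expX phiX tp - expX phiX tm))).
exists (fun y => (b - phiY y) / (lam * (expX phiX tp - expX phiX tm))).
have pstar_01 y := (pstar_ratio y).1.
split=> //; split=> //.
exact: (reactive_autocratic htp htm p0_01 pstar_01 (fun y => (pstar_ratio y).2) p0_eq).
Qed.
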